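(* Let $f_1,\dots,f_n:\mathbb{R}^d\to\mathbb{R}$ be such that each $f_i$ is $L_i$-smooth and has a minimizer $x_i$. Let $\alpha_1,\dots,\alpha_n\in(0,1)$ and $\tilde f(x) = \frac{1}{n}\sum_{i=1}^n f_i(\alpha_i x + (1-\alpha_i)x_i)$. Let $\hat L = \frac{1}{n}\sum_{i=1}^n L_i$, $L_\alpha = \frac{1}{n}\sum_{i=1}^n \alpha_i^2 L_i$, $w_i = \frac{\alpha_i^2 L_i}{n L_\alpha}$, $x^{\mathrm{avg}} = \sum_{i=1}^n w_i x_i$, and $D = \max_{i\neq j}\|x_i - x_j\|^2$. Fix $\epsilon>0$ and assume that either $\max_{i} \alpha_i \leq \sqrt{2\epsilon}/\sqrt{\hat L D}$, or $\alpha_i = \beta$ for all $i$ with $\beta \leq \sqrt{2\epsilon}/\sqrt{\hat L D}$. Then $x^{\mathrm{avg}}$ is an $\epsilon$-approximate minimizer of $\tilde f$, i.e. $\tilde f(x^{\mathrm{avg}}) - \inf_{x\in\mathbb{R}^d}\tilde f(x) \leq \epsilon$.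
   Context: A differentiable function $g$ is $L$-smooth if $\|\nabla g(x) - \nabla g(y)\| \leq L\|x-y\|$ for all $x,y$. *)

From HB Require Import structures.
From mathcomp Require Import all_boot all_order all_algebra.
From mathcomp Require Import all_classical all_reals all_analysis.
Set Implicit Arguments. Unset Strict Implicit. Unset Printing Implicit Defensive.
Import Order.TTheory GRing.Theory Num.Theory.
Import numFieldNormedType.Exports.
Local Open Scope ring_scope.

Section Defs.
Variables (R : realType) (d : nat).

Definition dotv (u v : 'rV[R]_d) : R := \sum_(k < d) u ord0 k * v ord0 k.
Definition enorm (u : 'rV[R]_d) : R := Num.sqrt (dotv u u).

Definition is_gradient (f : 'rV[R]_d -> R) (g : 'rV[R]_d -> 'rV[R]_d) : Prop :=
  forall x, differentiable f x /\ forall v, ('d f x) v = dotv (g x) v.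

Definition L_smooth (f : 'rV[R]_d -> R) (L : R) : Prop :=
  exists g, is_gradient f g /\
    forall x y, enorm (g x - g y) <= L * enorm (x - y).

Definition is_minimizer (f : 'rV[R]_d -> R) (x : 'rV[R]_d) : Prop :=
  forall y, f x <= f y.

Variables (n : nat) (f : 'I_n -> 'rV[R]_d -> R) (L : 'I_n -> R)
  (xs : 'I_n -> 'rV[R]_d) (alpha : 'I_n -> R).

Definition ftilde (x : 'rV[R]_d) : R :=
  n%:R^-1 * \sum_(i < n) f i (alpha i *: x + (1 - alpha i) *: xs i).
Definition Lhat : R := n%:R^-1 * \sum_(i < n) L i.
Definition Lalpha : R := n%:R^-1 * \sum_(i < n) alpha i ^+ 2 * L i.
Definition wgt (i : 'I_n) : R := alpha i ^+ 2 * L i / (n%:R * Lalpha).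
Definition xavg : 'rV[R]_d := \sum_(i < n) wgt i *: xs i.
Definition Dmax : R :=
  \big[Num.max/0]_(i < n) \big[Num.max/0]_(j < n | i != j) enorm (xs i - xs j) ^+ 2.
Definition alpha_max : R := \big[Num.max/0]_(i < n) alpha i.
End Defs.

(* Each f_i is L_i-smooth with minimiser x_i, so its gradient vanishes at
   x_i and the descent lemma gives f_i (x_i + v) <= f_i x_i + L_i/2 |v|^2.
   The i-th summand of ftilde at y is f_i (x_i + alpha_i (y - x_i)); at
   y = xavg, a convex combination of the x_j, Jensen gives
   |xavg - x_i|^2 <= D, so ftilde xavg <= (1/n) sum_i f_i x_i
   + Lhat B^2 D / 2 where alpha_i <= B.  The mean of the minima bounds
   ftilde from below everywhere, and the choice of B makes the gap at most
   eps. *)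
From HB Require Import structures.
From mathcomp Require Import all_boot all_order all_algebra.
From mathcomp Require Import all_classical all_reals all_analysis.
From mathcomp Require Import ring lra.
Set Implicit Arguments. Unset Strict Implicit. Unset Printing Implicit Defensive.
Import Order.TTheory GRing.Theory Num.Theory.
Import numFieldNormedType.Exports.
Local Open Scope ring_scope.

Section Euclidean.
Variables (R : realType) (d : nat).
Implicit Types (u v w : 'rV[R]_d) (a r K : R).

Lemma dotvDl u v w : dotv (u + v) w = dotv u w + dotv v w.
Proof. by rewrite /dotv -big_split; apply: eq_bigr => k _; rewrite mxE mulrDl. Qed.

Lemma dotvZl a u w : dotv (a *: u) w = a * dotv u w.
Proof. by rewrite /dotv mulr_sumr; apply: eq_bigr => k _; rewrite mxE mulrA. Qed.

Lemma dotvBl u v w : dotv (u - v) w = dotv u w - dotv v w.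
Proof. by rewrite dotvDl -scaleN1r dotvZl mulN1r. Qed.

Lemma dotvC u v : dotv u v = dotv v u.
Proof. by apply: eq_bigr => k _; rewrite mulrC. Qed.

Lemma dotvZr a u w : dotv u (a *: w) = a * dotv u w.
Proof. by rewrite dotvC dotvZl dotvC. Qed.

Lemma dotv0l v : dotv 0 v = 0.
Proof. by rewrite -(scale0r 0) dotvZl mul0r. Qed.

Lemma dotvv_ge0 u : 0 <= dotv u u.
Proof. by apply: sumr_ge0 => k _; rewrite -expr2 sqr_ge0. Qed.

Lemma enorm_sqr u : enorm u ^+ 2 = dotv u u.
Proof. by rewrite sqr_sqrtr // dotvv_ge0. Qed.

Lemma enormZ a u : enorm (a *: u) = `|a| * enorm u.
Proof.
rewrite /enorm dotvZl dotvZr mulrA -expr2 sqrtrM ?sqr_ge0 //.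
by rewrite sqrtr_sqr.
Qed.

Lemma dotv_young u v r :
  0 < r -> 2 * dotv u v <= r * dotv u u + r^-1 * dotv v v.
Proof.
move=> r_gt0.
have sq_ge0 := dotvv_ge0 (r *: u - v).
have sqE : dotv (r *: u - v) (r *: u - v)
    = r ^+ 2 * dotv u u - 2 * r * dotv u v + dotv v v.
  rewrite /dotv !mulr_sumr -sumrB -big_split /=; apply: eq_bigr => k _.
  by rewrite !mxE; ring.
rewrite -(ler_pM2l r_gt0) mulrDr mulVKf ?gt_eqF //.
by rewrite sqE expr2 in sq_ge0; nra.
Qed.

Lemma dotv_le_of_enorm_le u v K :
  0 < K -> enorm u <= K * enorm v -> dotv u v <= K * dotv v v.
Proof.
move=> K_gt0 uv.
have uu_le : dotv u u <= K ^+ 2 * dotv v v.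
  have := sqrtr_ge0 (dotv u u); rewrite -/(enorm u).
  by rewrite -!enorm_sqr -exprMn !expr2; nra.
have Kinv_gt0 : 0 < K^-1 by rewrite invr_gt0.
have := dotv_young u v Kinv_gt0; rewrite invrK.
have : K^-1 * dotv u u <= K * dotv v v by rewrite ler_pdivrMl // mulrA -expr2.
lra.
Qed.

Lemma sqr_convex_comb_le n (w y : 'I_n -> R) :
  (forall j, 0 <= w j) -> \sum_j w j = 1 ->
  (\sum_j w j * y j) ^+ 2 <= \sum_j w j * y j ^+ 2.
Proof.
move=> w_ge0 w_sum1.
have varE m : \sum_j w j * (y j - m) ^+ 2
    = \sum_j w j * y j ^+ 2 - 2 * m * \sum_j w j * y j + m ^+ 2 * \sum_j w j.
  by rewrite !mulr_sumr -sumrB -big_split; apply: eq_bigr => j _ /=; ring.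
have := varE (\sum_j w j * y j); rewrite w_sum1.
have : 0 <= \sum_j w j * (y j - \sum_j w j * y j) ^+ 2.
  by apply: sumr_ge0 => j _; rewrite mulr_ge0 // sqr_ge0.
set m := \sum_j w j * y j; nra.
Qed.

Lemma dotv_convex_comb_le n (w : 'I_n -> R) (u : 'I_n -> 'rV[R]_d) :
  (forall j, 0 <= w j) -> \sum_j w j = 1 ->
  dotv (\sum_j w j *: u j) (\sum_j w j *: u j) <= \sum_j w j * dotv (u j) (u j).
Proof.
move=> w_ge0 w_sum1; rewrite /dotv.
under [X in _ <= X]eq_bigr do rewrite mulr_sumr.
rewrite (exchange_big _ _ _ _ _ (fun j k => w j * (u j ord0 k * u j ord0 k))).
apply: ler_sum => k _; rewrite !summxE.
have wuE j : (w j *: u j) ord0 k = w j * u j ord0 k by rewrite [LHS]mxE.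
rewrite (eq_bigr _ (fun j _ => wuE j)) -expr2.
under [X in _ <= X]eq_bigr do rewrite -expr2.
exact: sqr_convex_comb_le.
Qed.

End Euclidean.

Section Descent.
Variables (R : realType) (d : nat).
Variables (f : 'rV[R]_d -> R) (g : 'rV[R]_d -> 'rV[R]_d).
Hypothesis grad_f : is_gradient f g.

Lemma is_derive_along_line x v t :
  is_derive t (1 : R) (fun s => f (x + s *: v)) (dotv (g (x + t *: v)) v).
Proof.
have [df dfE] := grad_f (x + t *: v).
have quotE : (fun h : R => h^-1 *: (((fun s => f (x + s *: v)) \o shift t) (h *: 1)
                                    - f (x + t *: v)))
    = (fun h : R => h^-1 *: ((f \o shift (x + t *: v)) (h *: v) - f (x + t *: v))).
  apply/funext => h /=; congr (_ *: (f _ - _)).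
  by rewrite [h%:A]mulr1 scalerDl addrCA addrA.
split; first by rewrite /derivable quotE; exact: diff_derivable.
by rewrite /derive quotE -dfE -deriveE.
Qed.

Lemma gradient_eq0_at_min x v : is_minimizer f x -> dotv (g x) v = 0.
Proof.
move=> xmin; pose phi s := f (x + s *: v).
have phi_derivable t : t \in `]-1, 1[ -> derivable phi t 1.
  by move=> _; have [] := is_derive_along_line x v t.
have := @derive1_at_min R phi (-1) 1 0 (ltW (lt_trans (ltrN10 R) ltr01)) phi_derivable.
rewrite in_itv /= ltrN10 ltr01 => /(_ isT) phi_min.
have phi'0 : is_derive (0 : R) (1 : R) phi 0.
  by apply: phi_min => t _; rewrite /phi scale0r addr0; exact: xmin.
have := @derive_val _ _ _ _ _ _ _ (is_derive_along_line x v 0).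
by rewrite scale0r addr0 (@derive_val _ _ _ _ _ _ _ phi'0).
Qed.

Variable L : R.
Hypotheses (L_gt0 : 0 < L) (g_lip : forall x y, enorm (g x - g y) <= L * enorm (x - y)).

(* psi s = f (x + s v) - c s^2 is nonincreasing on [0, 1] because its
   derivative <g (x + s v) - g x, v> - 2 c s is at most L s |v|^2 - 2 c s. *)
Lemma descent_at_min x v :
  is_minimizer f x -> f (x + v) <= f x + L / 2 * dotv v v.
Proof.
move=> xmin; pose c := L / 2 * dotv v v.
pose psi s := f (x + s *: v) - c * (s * s).
have psi' s : is_derive s (1 : R) psi (dotv (g (x + s *: v)) v - c * (s + s)).
  have -> : psi = (fun s => f (x + s *: v)) - c \*: (@id R * @id R).
    by apply/funext.
  apply: is_derive_eq; first exact: (is_deriveB (is_derive_along_line x v s)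
    (is_deriveZ c (is_deriveM (is_derive_id s 1) (is_derive_id s 1)))).
  by rewrite [s%:A]mulr1.
have psi_derivable s : derivable psi s 1 by have [] := psi' s.
have psi'_le0 s : s \in `]0, 1[ -> (psi^`() s <= 0)%classic.
  rewrite in_itv /= => /andP[s_gt0 _].
  rewrite derive1E (@derive_val _ _ _ _ _ _ _ (psi' s)).
  have := g_lip (x + s *: v) x.
  rewrite addrAC subrr add0r enormZ (gtr0_norm s_gt0) mulrA.
  move/(dotv_le_of_enorm_le (mulr_gt0 L_gt0 s_gt0)).
  by rewrite dotvBl (gradient_eq0_at_min v xmin) /c; lra.
have in0 : (0 : R) \in `[0, 1] by rewrite bound_itvE ler01.
have in1 : (1 : R) \in `[0, 1] by rewrite bound_itvE ler01.
have := ler0_derive1_le_cc (fun s _ => psi_derivable s) psi'_le0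
  (derivable_within_continuous (fun s _ => psi_derivable s)) in1 in0 ler01.
by rewrite /psi !scale0r !addr0 scale1r !mulr0 !mulr1 subr0 /c; lra.
Qed.

End Descent.

Lemma L_smooth_descent_at_min (R : realType) (d : nat) (f : 'rV[R]_d -> R) L x v :
  L_smooth f L -> 0 < L -> is_minimizer f x -> f (x + v) <= f x + L / 2 * dotv v v.
Proof. by move=> [g [grad_f g_lip]] L_gt0; exact: descent_at_min. Qed.

Lemma sqr_sqrt_div_mul_le (R : rcfType) (c p : R) :
  0 <= c -> 0 <= p -> (Num.sqrt c / Num.sqrt p) ^+ 2 * p <= c.
Proof.
move=> c_ge0 p_ge0; rewrite expr_div_n !sqr_sqrtr //.
have [->|p_neq0] := eqVneq p 0; first by rewrite mulr0.
by rewrite divfK.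
Qed.

Section Surrogate.
Variables (R : realType) (d n : nat) (f : 'I_n -> 'rV[R]_d -> R) (L : 'I_n -> R)
  (xs : 'I_n -> 'rV[R]_d) (alpha : 'I_n -> R).
Hypotheses (n_gt0 : (0 < n)%N) (L_gt0 : forall i, 0 < L i)
  (alpha_gt0 : forall i, 0 < alpha i).

Lemma natr_mul_Lalpha : n%:R * Lalpha L alpha = \sum_i alpha i ^+ 2 * L i.
Proof. by rewrite mulVKf // pnatr_eq0 -lt0n. Qed.

Lemma sum_sqr_alpha_L_gt0 : 0 < \sum_i alpha i ^+ 2 * L i.
Proof.
rewrite (bigD1 (Ordinal n_gt0)) //= ltr_pwDl ?mulr_gt0 ?exprn_gt0 //.
by apply: sumr_ge0 => i _; rewrite mulr_ge0 ?sqr_ge0 ?ltW.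
Qed.

Lemma wgt_ge0 j : 0 <= wgt L alpha j.
Proof.
rewrite /wgt natr_mul_Lalpha divr_ge0 ?mulr_ge0 ?sqr_ge0 ?ltW //.
exact: sum_sqr_alpha_L_gt0.
Qed.

Lemma sum_wgt : \sum_j wgt L alpha j = 1.
Proof. by rewrite -mulr_suml natr_mul_Lalpha divff // gt_eqF ?sum_sqr_alpha_L_gt0. Qed.

Lemma xavg_subr_sqr_le_Dmax i :
  dotv (xavg L xs alpha - xs i) (xavg L xs alpha - xs i) <= Dmax xs.
Proof.
have -> : xavg L xs alpha - xs i = \sum_j wgt L alpha j *: (xs j - xs i).
  under [RHS]eq_bigr do rewrite scalerBr.
  by rewrite sumrB -scaler_suml sum_wgt scale1r.
apply: le_trans (dotv_convex_comb_le _ wgt_ge0 sum_wgt) _.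
rewrite -[Dmax xs]mul1r -sum_wgt mulr_suml.
apply: ler_sum => j _; apply: ler_wpM2l; first exact: wgt_ge0.
have [->|ji] := eqVneq j i.
  by rewrite subrr dotv0l; exact: bigmax_ge_id.
rewrite -enorm_sqr; apply: le_trans (le_bigmax 0 _ j).
exact: (le_bigmax_cond 0 (fun k => enorm (xs j - xs k) ^+ 2) ji).
Qed.

Hypotheses (f_smooth : forall i, L_smooth (f i) (L i))
  (xs_min : forall i, is_minimizer (f i) (xs i)).

Lemma ftilde_ge_mean_min y :
  n%:R^-1 * \sum_i f i (xs i) <= ftilde f xs alpha y.
Proof.
apply: ler_wpM2l; first by rewrite invr_ge0.
by apply: ler_sum => i _; exact: xs_min.
Qed.

Lemma ftilde_xavg_le B : (forall i, alpha i <= B) ->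
  ftilde f xs alpha (xavg L xs alpha)
    <= n%:R^-1 * \sum_i f i (xs i) + B ^+ 2 * (Lhat L * Dmax xs) / 2.
Proof.
move=> alpha_le.
have term_le i : f i (alpha i *: xavg L xs alpha + (1 - alpha i) *: xs i)
    <= f i (xs i) + L i / 2 * (B ^+ 2 * Dmax xs).
  have -> : alpha i *: xavg L xs alpha + (1 - alpha i) *: xs i
      = xs i + alpha i *: (xavg L xs alpha - xs i).
    by rewrite scalerBr scalerBl scale1r addrC -addrA [- _ + _]addrC.
  apply: le_trans (L_smooth_descent_at_min _ (f_smooth i) (L_gt0 i) (xs_min i)) _.
  rewrite lerD2l dotvZl dotvZr [alpha i * (alpha i * _)]mulrA -expr2.
  apply: ler_wpM2l; first by rewrite divr_ge0 ?ltW.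
  apply: le_trans (ler_wpM2l (sqr_ge0 _) (xavg_subr_sqr_le_Dmax i)) _.
  apply: ler_wpM2r; first exact: bigmax_ge_id.
  have B_ge0 := le_trans (ltW (alpha_gt0 i)) (alpha_le i).
  by rewrite ler_sqr ?nnegrE // ltW.
rewrite /ftilde; apply: le_trans (ler_wpM2l _ (ler_sum _ (fun i _ => term_le i))) _.
  by rewrite invr_ge0 ler0n.
rewrite big_split mulrDr lerD2l.
suff -> : n%:R^-1 * \sum_i L i / 2 * (B ^+ 2 * Dmax xs)
    = B ^+ 2 * (Lhat L * Dmax xs) / 2 by [].
by rewrite /Lhat -!mulr_suml; ring.
Qed.

End Surrogate.

Theorem theorem1 (R : realType) (d n : nat) (f : 'I_n -> 'rV[R]_d -> R)
  (L : 'I_n -> R) (xs : 'I_n -> 'rV[R]_d) (alpha : 'I_n -> R) (eps : R) :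
  (0 < n)%N ->
  (forall i, 0 < L i) ->
  (forall i, L_smooth (f i) (L i)) ->
  (forall i, is_minimizer (f i) (xs i)) ->
  (forall i, 0 < alpha i < 1) ->
  0 < eps ->
  (alpha_max alpha <= Num.sqrt (2 * eps) / Num.sqrt (Lhat L * Dmax xs)
   \/ exists beta : R, (forall i, alpha i = beta) /\
        beta <= Num.sqrt (2 * eps) / Num.sqrt (Lhat L * Dmax xs)) ->
  ((ftilde f xs alpha (xavg L xs alpha))%:E
     - ereal_inf [set (ftilde f xs alpha x)%:E | x in [set: 'rV[R]_d]]
   <= eps%:E)%E.
Proof.
move=> n_gt0 L_gt0 f_smooth xs_min alpha01 eps_gt0 B_choice.
set B := _ / _ in B_choice.
have alpha_gt0 i : 0 < alpha i by case/andP: (alpha01 i).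
have alpha_le i : alpha i <= B.
  case: B_choice => [max_le|[beta [->]]] //.
  exact: le_trans (le_bigmax 0 alpha i) max_le.
have LD_ge0 : 0 <= Lhat L * Dmax xs.
  rewrite mulr_ge0 ?bigmax_ge_id // mulr_ge0 ?invr_ge0 ?ler0n //.
  by apply: sumr_ge0 => i _; exact: ltW.
have inf_ge : ((n%:R^-1 * \sum_i f i (xs i))%:E
    <= ereal_inf [set (ftilde f xs alpha x)%:E | x in [set: 'rV[R]_d]])%E.
  apply/ereal_infP => _ [x _ <-]; rewrite lee_fin.
  exact: ftilde_ge_mean_min.
apply: le_trans (leeB (lexx _) inf_ge) _.
rewrite -EFinB lee_fin lerBlDl.
apply: le_trans (ftilde_xavg_le n_gt0 L_gt0 alpha_gt0 f_smooth xs_min alpha_le) _.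
rewrite lerD2l ler_pdivrMr // [eps * 2]mulrC.
exact: sqr_sqrt_div_mul_le (ltW (mulr_gt0 (ltr0Sn _ 1) eps_gt0)) LD_ge0.
Qed.
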